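(* Let $P\in\mathcal{M}_1$. For every $X\in L^\infty(P)$ we have $\rho^P(X)\ge\widetilde\rho^P(X)=\widehat\rho^P(X)$, and consequently $C^P\subseteq\widehat C^P$.
   Context: $(\Omega,\mathcal{F})$ is a measurable space, $\mathcal{M}_1$ the set of probability measures on it, $\mathcal{X}$ the space of bounded $\mathcal{F}$-measurable real functions on $\Omega$ (bounded pointwise). For $P\in\mathcal{M}_1$, $L^\infty(P)=L^\infty(\Omega,\mathcal{F},P)$ and $\mathcal{P}^P=\{Q\in\mathcal{M}_1:Q\ll P\}$. Fix a penalty function $\alpha:\mathcal{M}_1\to\mathbb{R}\cup\{+\infty\}$ such that $\rho(X):=\sup_{Q\in\mathcal{M}_1}\{\mathbb{E}_Q[-X]-\alpha(Q)\}$ is real-valued for all $X\in\mathcal{X}$. For $X\in L^\infty(P)$ define $\rho^P(X)=\inf_{\{\widetilde X\in\mathcal{X}:P(\widetilde X=X)=1\}}\rho(\widetilde X)$, $\widehat\rho^P(X)=\sup_{Q\in\mathcal{P}^P}\{\mathbb{E}_Q[-X]-\alpha(Q)\}$, and $\widetilde\rho^P(X)=\sup_{Q\in\mathcal{M}_1}\inf_{\{\widetilde X\in\mathcal{X}:P(\widetilde X=X)=1\}}\{\mathbb{E}_Q[-\widetilde X]-\alpha(Q)\}$. Acceptance sets: $C^P=\{X\in L^\infty(P):\rho^P(X)\le0\}$, $\widehat C^P=\{X\in L^\infty(P):\widehat\rho^P(X)\le0\}$. *)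

From HB Require Import structures.
From mathcomp Require Import all_boot all_order all_algebra.
From mathcomp Require Import all_classical all_reals all_analysis.
Set Implicit Arguments. Unset Strict Implicit. Unset Printing Implicit Defensive.
Import Order.TTheory GRing.Theory Num.Theory.
Local Open Scope classical_set_scope.
Local Open Scope ring_scope.
Local Open Scope ereal_scope.

Section defs.
Context (d : measure_display) (T : measurableType d) (R : realType).

Definition bddX (X : T -> R) : Prop :=
  measurable_fun setT X /\ exists M : R, forall w, (`|X w| <= M)%R.

(* L^\infty(P), represented by (P-essentially bounded) measurable
   representatives; all functionals below depend only on the P-a.s. class. *)
Definition Linf (P : probability T R) (X : T -> R) : Prop :=
  measurable_fun setT X /\
  exists M : R, P [set w | (M < `|X w|)%R] = 0.

Definition pen_term (alpha : probability T R -> \bar R)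
  (Q : probability T R) (X : T -> R) : \bar R :=
  (\int[Q]_w (- X w)%:E) - alpha Q.

Definition rho (alpha : probability T R -> \bar R) (X : T -> R) : \bar R :=
  ereal_sup [set pen_term alpha Q X | Q in [set: probability T R]].

Definition reps (P : probability T R) (X : T -> R) : set (T -> R) :=
  [set Xt | bddX Xt /\ P [set w | Xt w = X w] = 1].

Definition rhoP (alpha : probability T R -> \bar R) (P : probability T R)
  (X : T -> R) : \bar R :=
  ereal_inf [set rho alpha Xt | Xt in reps P X].

Definition rho_hat (alpha : probability T R -> \bar R) (P : probability T R)
  (X : T -> R) : \bar R :=
  ereal_sup [set pen_term alpha Q X | Q in [set Q : probability T R | Q `<< P]].

Definition rho_tilde (alpha : probability T R -> \bar R) (P : probability T R)
  (X : T -> R) : \bar R :=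
  ereal_sup [set ereal_inf [set pen_term alpha Q Xt | Xt in reps P X]
            | Q in [set: probability T R]].

Definition CP alpha P : set (T -> R) := [set X | Linf P X /\ rhoP alpha P X <= 0].
Definition CP_hat alpha P : set (T -> R) := [set X | Linf P X /\ rho_hat alpha P X <= 0].

End defs.

(* For Q << P the expectation E_Q[-Xt] is the same for every bounded
   representative Xt of X, so the inner infimum defining rho_tilde equals
   E_Q[-X] - alpha(Q).  If Q is not dominated by P, pick a P-null set A with
   Q(A) > 0: adding k 1_A to a representative keeps it a representative and
   lowers E_Q[-Xt] by k Q(A), so, as alpha(Q) > -oo, the inner infimum is -oo.
   Hence rho_tilde = rho_hat, while rho_tilde <= rho^P is the sup-inf <=
   inf-sup inequality; the inclusion of acceptance sets follows. *)

From HB Require Import structures.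
From mathcomp Require Import all_boot all_order all_algebra.
From mathcomp Require Import all_classical all_reals all_analysis.
From mathcomp Require Import lra measurable_realfun.
Set Implicit Arguments. Unset Strict Implicit.
Import Order.TTheory GRing.Theory Num.Theory.
Local Open Scope classical_set_scope.
Local Open Scope ring_scope.
Local Open Scope ereal_scope.

Lemma le_EFin_eqNy {R : realType} (x : \bar R) :
  (forall r : R, x <= r%:E) -> x = -oo.
Proof.
case: x => [r| |] le_x //; last by have := le_x 0%R.
have := le_x (r - 1)%R; rewrite lee_fin => ?; exfalso; lra.
Qed.

Lemma exists_subMr_le {R : realType} (c q a : \bar R) (r : R) :
  c \is a fin_num -> q \is a fin_num -> 0 < q -> a != -oo ->
  exists k : R, c - k%:E * q - a <= r%:E.
Proof.
move=> /fineK <- /fineK <-; rewrite lte_fin => q_gt0.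
case: a => [a _| _ |//].
- exists ((fine c - r - a) / fine q)%R.
  by rewrite -EFinM -!EFinB lee_fin divfK ?gt_eqF //; lra.
- by exists 0%R; rewrite /= addeNy leNye.
Qed.

Section real_functions.
Context d (T : measurableType d) (R : realType).
Implicit Types f g : T -> R.

Lemma measurable_eq_set f g :
  measurable_fun setT f -> measurable_fun setT g ->
  measurable [set w | f w = g w].
Proof.
move=> mf mg; have -> : [set w | f w = g w] = (f \- g)%R @^-1` [set 0%R].
  by apply/seteqP; split => w /=; [move=> ->; rewrite subrr | move/subr0_eq].
have := measurable_funB mf mg measurableT (measurable_set1 0%R).
by rewrite setTI.
Qed.

Lemma bddXN f : bddX f -> bddX (fun w => - f w)%R.
Proof.
move=> [mf [M fM]]; split; first exact: measurable_funN.
by exists M => w; rewrite normrN.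
Qed.

Lemma bddXD f g : bddX f -> bddX g -> bddX (fun w => f w + g w)%R.
Proof.
move=> [mf [M fM]] [mg [N gN]]; split; first exact: measurable_funD.
by exists (M + N)%R => w; rewrite (le_trans (ler_normD _ _)) // lerD.
Qed.

Lemma bddX_scale_indic (A : set T) (k : R) : measurable A ->
  bddX (fun w => k * \1_A w)%R.
Proof.
move=> mA; split.
  by apply: measurable_funM => //; exact: measurable_indic.
exists `|k|%R => w; rewrite normrM indicE.
by case: (_ \in _); rewrite ?normr1 ?normr0 ?mulr1 ?mulr0.
Qed.

Lemma bddX_integrable (Q : probability T R) f : bddX f ->
  Q.-integrable setT (EFin \o f).
Proof.
move=> [mf [M fM]]; apply: measurable_bounded_integrable => //.
- exact: le_lt_trans (probability_le1 Q measurableT) (ltry _).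
- exists M; split; first exact: num_real.
  by move=> N /ltW MN w _ /=; exact: le_trans (fM w) MN.
Qed.

End real_functions.

Section representatives.
Context d (T : measurableType d) (R : realType) (P : probability T R).

Lemma probability_setC0 (S : set T) : measurable S -> P (~` S) = 0 -> P S = 1.
Proof.
move=> mS PSC; have := probability_setC P (measurableC mS).
by rewrite setCK PSC sube0.
Qed.

Lemma reps_neq_null (X Xt : T -> R) :
  measurable_fun setT X -> reps P X Xt ->
  P (~` [set w | Xt w = X w]) = 0.
Proof.
move=> mX [[mXt _] PXt]; rewrite probability_setC ?PXt ?subee //.
exact: measurable_eq_set.
Qed.

Lemma reps_eq_off_null (X Xt : T -> R) N :
  measurable_fun setT X -> bddX Xt ->
  measurable N -> P N = 0 -> (forall w, ~ N w -> Xt w = X w) -> reps P X Xt.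
Proof.
move=> mX bXt mN PN XtX; split => //.
apply: probability_setC0; first exact: measurable_eq_set bXt.1 mX.
apply/eqP; rewrite eq_le measure_ge0 andbT -PN le_measure ?inE //.
- by apply: measurableC; exact: measurable_eq_set bXt.1 mX.
- by move=> w /= neq; apply: contrapT => Nw; exact: neq (XtX w Nw).
Qed.

Lemma Linf_exists_reps (X : T -> R) : Linf P X -> exists Xt, reps P X Xt.
Proof.
move=> [mX [M PM]]; set N := [set w | M < `|X w|]%R in PM.
have mN : measurable N.
  have -> : N = (Num.norm \o X) @^-1` `]M, +oo[.
    by apply/seteqP; split => w /=; rewrite in_itv /= andbT.
  have := measurableT_comp (@normr_measurable R _) mX measurableT
    (measurable_itv `]M, +oo[).
  by rewrite setTI.
exists (fun w => X w * \1_(~` N) w)%R; apply: (reps_eq_off_null mX _ mN PM).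
- split.
    by apply: measurable_funM => //; exact/measurable_indic/measurableC.
  exists `|M|%R => w; rewrite indicE normrM.
  have [Nw|nNw] := pselect (N w).
    by rewrite memNset //= normr0 mulr0.
  rewrite mem_set //= normr1 mulr1 (le_trans _ (ler_norm M)) // leNgt.
  exact/negP.
- by move=> w nNw; rewrite indicE mem_set // mulr1.
Qed.

Lemma reps_addr_indic (X X0 : T -> R) A (k : R) :
  measurable_fun setT X -> reps P X X0 -> measurable A -> P A = 0 ->
  reps P X (fun w => X0 w + k * \1_A w)%R.
Proof.
move=> mX repX0 mA PA; have [bX0 _] := repX0.
have mC : measurable (~` [set w | X0 w = X w]).
  by apply: measurableC; exact: measurable_eq_set bX0.1 mX.
apply: (reps_eq_off_null mX _ (measurableU _ _ mC mA)).
- exact/bddXD/bddX_scale_indic.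
- exact: null_set_setU mC mA (reps_neq_null mX repX0) PA.
- move=> w /not_orP[/contrapT X0X nAw].
  by rewrite indicE memNset // mulr0 addr0.
Qed.

End representatives.

Section expectation.
Context d (T : measurableType d) (R : realType).

Lemma integral_reps (P Q : probability T R) (X Xt : T -> R) : Q `<< P ->
  measurable_fun setT X -> reps P X Xt ->
  \int[Q]_w (- Xt w)%:E = \int[Q]_w (- X w)%:E.
Proof.
move=> QP mX repXt; have mXt := repXt.1.1.
apply: ae_eq_integral => //;
  try by apply/measurable_EFinP; exact: measurable_funN.
apply: (null_dominates_ae_eq measurableT QP).
exists (~` [set w | Xt w = X w]); split.
- by apply: measurableC; exact: measurable_eq_set.
- exact: reps_neq_null.
- by move=> w /= + XtX; apply => _; rewrite XtX.
Qed.

Lemma integral_N_addr_indic (Q : probability T R) (f : T -> R) A (k : R) :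
  bddX f -> measurable A ->
  \int[Q]_w (- (f w + k * \1_A w))%:E = \int[Q]_w (- f w)%:E - k%:E * Q A.
Proof.
move=> bf mA; under eq_integral do rewrite opprD EFinB.
rewrite integralB_EFin //; [congr (_ - _)|exact/bddX_integrable/bddXN|].
  under eq_integral do rewrite EFinM.
  by rewrite integralZl ?integral_indic ?setIT //; exact: integrable_indic.
exact/bddX_integrable/bddX_scale_indic.
Qed.

End expectation.

Lemma not_dominates_null_set d (T : measurableType d) (R : realType)
    (nu : set T -> \bar R) (mu : {content set T -> \bar R}) :
  ~ nu `<< mu -> exists A, [/\ measurable A, mu A = 0 & nu A != 0].
Proof.
move=> numu; apply: contrapT => nA; apply: numu.
apply/null_content_dominatesP => A mA muA.
by apply: contrapT => /eqP nuA; apply: nA; exists A.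
Qed.

Lemma ereal_sup_inf_le_inf_sup (R : realType) (I J : Type) (SI : set I)
    (SJ : set J) (f : I -> J -> \bar R) :
  ereal_sup [set ereal_inf [set f i j | j in SJ] | i in SI] <=
  ereal_inf [set ereal_sup [set f i j | i in SI] | j in SJ].
Proof.
apply: ge_ereal_sup => _ [i SIi <-]; apply: le_ereal_inf_tmp => _ [j SJj <-].
apply: (@le_trans _ _ (f i j)); first by apply: ereal_inf_lbound; exists j.
by apply: ereal_sup_ubound; exists i.
Qed.

Section penalized_expectation.
Context d (T : measurableType d) (R : realType).
Variables (alpha : probability T R -> \bar R) (P : probability T R).

Local Notation inf_reps Q X :=
  (ereal_inf [set pen_term alpha Q Xt | Xt in reps P X]).

Lemma rho_tilde_le_rhoP X : rho_tilde alpha P X <= rhoP alpha P X.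
Proof.
exact: (ereal_sup_inf_le_inf_sup _ _ (fun Q Xt => pen_term alpha Q Xt)).
Qed.

Lemma inf_reps_dominated (Q : probability T R) (X : T -> R) :
  Q `<< P -> Linf P X -> inf_reps Q X = pen_term alpha Q X.
Proof.
move=> QP LX; have [X0 repX0] := Linf_exists_reps LX.
apply/le_anti/andP; split.
- apply: ge_ereal_inf; exists (pen_term alpha Q X0); first by exists X0.
  by rewrite /pen_term (integral_reps QP LX.1 repX0).
- apply: le_ereal_inf_tmp => _ [Xt repXt <-].
  by rewrite /pen_term (integral_reps QP LX.1 repXt).
Qed.

Lemma inf_reps_not_dominated (Q : probability T R) (X : T -> R) :
  alpha Q != -oo -> ~ Q `<< P -> Linf P X -> inf_reps Q X = -oo.
Proof.
move=> alphaQ nQP LX; have [X0 repX0] := Linf_exists_reps LX.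
have [A [mA PA QA]] := not_dominates_null_set nQP.
set c := \int[Q]_w (- X0 w)%:E.
have c_fin : c \is a fin_num.
  apply: integrable_fin_num => //.
  exact: (bddX_integrable Q (bddXN repX0.1)).
have QA_gt0 : 0 < Q A by rewrite lt0e QA measure_ge0.
have pen_shift k :
    pen_term alpha Q (fun w => X0 w + k * \1_A w)%R = c - k%:E * Q A - alpha Q.
  by rewrite /pen_term integral_N_addr_indic //; exact: repX0.1.
apply: le_EFin_eqNy => r; apply: ge_ereal_inf.
have [k pen_le] :=
  exists_subMr_le r c_fin (fin_num_measure Q A mA) QA_gt0 alphaQ.
exists (c - k%:E * Q A - alpha Q) => //; rewrite -pen_shift.
exists (fun w => X0 w + k * \1_A w)%R => //.
exact: reps_addr_indic LX.1 repX0 mA PA.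
Qed.

Lemma rho_tilde_eq_rho_hat (X : T -> R) : (forall Q, alpha Q != -oo) ->
  Linf P X -> rho_tilde alpha P X = rho_hat alpha P X.
Proof.
move=> alpha_neqNy LX; apply/le_anti/andP; split.
- apply: ge_ereal_sup => _ [Q _ <-].
  have [QP|nQP] := pselect (Q `<< P).
    by rewrite inf_reps_dominated //; apply: ereal_sup_ubound; exists Q.
  by rewrite inf_reps_not_dominated // leNye.
- apply: ge_ereal_sup => _ [Q QP <-]; rewrite -inf_reps_dominated //.
  by apply: ereal_sup_ubound; exists Q.
Qed.

End penalized_expectation.

Unset Implicit Arguments.

Theorem lemma3p5 (d : measure_display) (T : measurableType d) (R : realType)
  (alpha : probability T R -> \bar R)
  (halpha : forall Q, alpha Q != -oo)
  (hrho : forall X : T -> R, bddX X -> rho alpha X \is a fin_num)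
  (P : probability T R) :
  (forall X : T -> R, Linf P X ->
     rho_tilde alpha P X <= rhoP alpha P X /\
     rho_tilde alpha P X = rho_hat alpha P X) /\
  CP alpha P `<=` CP_hat alpha P.
Proof.
split=> [X LX|X [LX rhoP_le0]].
  by split; [exact: rho_tilde_le_rhoP | exact: rho_tilde_eq_rho_hat].
split=> //; rewrite -rho_tilde_eq_rho_hat //.
exact: le_trans (rho_tilde_le_rhoP _ _ _) rhoP_le0.
Qed.
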